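(* Let $P=\{(u_1,v_1),\ldots,(u_n,v_n)\}\subseteq\{a,b\}^*\times\{a,b\}^*$ with $n\ge 3$, and let $W\subseteq F(\Gamma)\times F(\Gamma)$ be the set of pairs constructed from $P$ as described in the context. If $P$ has a solution as an instance of Restricted PCP, then $W$ has a solution as an instance of the Identity Correspondence Problem, i.e. there is a nonempty finite sequence of pairs from $W$ whose componentwise product in $F(\Gamma)\times F(\Gamma)$ equals $(\varepsilon,\varepsilon)$.
   Context: For a set $H$, $F(H)$ denotes the free group on $H$; $\varepsilon$ is its identity (the empty word), and pairs of elements of free groups are multiplied componentwise. Restricted PCP: given $P=\{(u_1,v_1),\ldots,(u_n,v_n)\}\subseteq\{a,b\}^*\times\{a,b\}^*$ with $n\ge3$, a solution is a finite (possibly empty) sequence $l_1,\ldots,l_k$ with $2\le l_i\le n-1$ such that $u_1u_{l_1}\cdots u_{l_k}u_n=v_1v_{l_1}\cdots v_{l_k}v_n$. Construction of $W$. Let $\Gamma_i=\{a_i,b_i\}$ for $1\le i\le4$ and $\Gamma_B=\{x_1,\ldots,x_8\}$ be pairwise disjoint sets of letters, and $\Gamma=\Gamma_1\cup\Gamma_2\cup\Gamma_3\cup\Gamma_4\cup\Gamma_B$. Let $\delta_i:F(\{a,b\})\to F(\Gamma_i)$ be the homomorphism with $\delta_i(a)=a_i$, $\delta_i(b)=b_i$, and set $u_{ik}=\delta_i(u_k)$, $v_{ik}=\delta_i(v_k)$. For a positive integer $j$ let $\phi_i(j)=a_i^jb_i$ and $\psi_i(j)=(a_i^{-1})^jb_i^{-1}$.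 Put $x_0:=x_8$. For $p=1,2,3,4$ define $W_{4(p-1)}=\{(x_{2p-2}\,v_{p1}^{-1}u_{p1}\,x_{2p-1}^{-1},\; x_{2p-2}\,b_p\,x_{2p-1}^{-1})\}$, $W_{4(p-1)+1}=\{(x_{2p-1}\,u_{pj}\,x_{2p-1}^{-1},\; x_{2p-1}\,\phi_p(j)\,x_{2p-1}^{-1}) : 2\le j\le n-1\}$, $W_{4(p-1)+2}=\{(x_{2p-1}\,u_{pn}v_{pn}^{-1}\,x_{2p}^{-1},\; x_{2p-1}\,b_p^{-1}\,x_{2p}^{-1})\}$, $W_{4(p-1)+3}=\{(x_{2p}\,v_{pj}^{-1}\,x_{2p}^{-1},\; x_{2p}\,\psi_p(j)\,x_{2p}^{-1}) : 2\le j\le n-1\}$, and $W=W_0\cup W_1\cup\cdots\cup W_{15}$ (a set of $8(n-1)$ pairs). *)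

From HB Require Import structures.
From mathcomp Require Import all_boot.
Set Implicit Arguments. Unset Strict Implicit. Unset Printing Implicit Defensive.

Inductive ab := ltr_a | ltr_b.

(* An instance P = [(u_1,v_1);...;(u_n,v_n)] is a list; u_k = nth _ P (k-1). *)
Definition pcp_u (P : seq (seq ab * seq ab)) (k : nat) : seq ab :=
  (nth ([::], [::]) P k.-1).1.
Definition pcp_v (P : seq (seq ab * seq ab)) (k : nat) : seq ab :=
  (nth ([::], [::]) P k.-1).2.

Definition restricted_pcp_solution (P : seq (seq ab * seq ab)) (ls : seq nat) : Prop :=
  let n := size P in
  (forall l, l \in ls -> 2 <= l <= n.-1) /\
  pcp_u P 1 ++ flatten (map (pcp_u P) ls) ++ pcp_u P n =
  pcp_v P 1 ++ flatten (map (pcp_v P) ls) ++ pcp_v P n.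

(* Letters of Gamma: a_i, b_i (i = 1..4) and x_k (k = 1..8). *)
Inductive letter := La of nat | Lb of nat | Lx of nat.

Definition letter_eqb (x y : letter) : bool :=
  match x, y with
  | La i, La j => i == j
  | Lb i, Lb j => i == j
  | Lx i, Lx j => i == j
  | _, _ => false
  end.

Lemma letter_eqP : Equality.axiom letter_eqb.
Proof.
case=> [i|i|i] [j|j|j] /=; try by constructor.
all: by apply: (iffP eqP) => [->|[]].
Qed.

HB.instance Definition _ := hasDecEq.Build letter letter_eqP.

(* A generator-or-inverse: (x, false) is x, (x, true) is x^{-1}. *)
Definition gen := (letter * bool)%type.
(* Words over Gamma ∪ Gamma^{-1}; elements of F(Gamma) are represented by words,
   and two words represent the same element iff their free reductions agree. *)
Definition word := seq gen.

Definition ginv (g : gen) : gen := (g.1, ~~ g.2).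

Definition fred (w : word) : word :=
  foldr (fun g acc => match acc with
                      | h :: t => if h == ginv g then t else g :: acc
                      | [::] => [:: g]
                      end) [::] w.

Definition winv (w : word) : word := rev (map ginv w).

Definition lw (x : letter) : word := [:: (x, false)].

Definition delta (p : nat) (w : seq ab) : word :=
  map (fun c => match c with ltr_a => (La p, false) | ltr_b => (Lb p, false) end) w.

Definition uw (P : seq (seq ab * seq ab)) (p k : nat) : word := delta p (pcp_u P k).
Definition vw (P : seq (seq ab * seq ab)) (p k : nat) : word := delta p (pcp_v P k).

Definition phi (p j : nat) : word := nseq j (La p, false) ++ lw (Lb p).
Definition psi (p j : nat) : word := nseq j (La p, true) ++ [:: (Lb p, true)].

(* x_k with the convention x_0 := x_8. *)
Definition xw (k : nat) : word := lw (Lx (if k == 0 then 8 else k)).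

(* membership in W = W_0 ∪ ... ∪ W_15 (blocks W_{4(p-1)+r}, p = 1..4, r = 0..3) *)
Definition inW (P : seq (seq ab * seq ab)) (pr : word * word) : Prop :=
  let n := size P in
  exists2 p, 1 <= p <= 4 &
  [\/ pr = (xw (2*p-2) ++ winv (vw P p 1) ++ uw P p 1 ++ winv (xw (2*p-1)),
            xw (2*p-2) ++ lw (Lb p) ++ winv (xw (2*p-1))),
      (exists2 j, 2 <= j <= n.-1 &
         pr = (xw (2*p-1) ++ uw P p j ++ winv (xw (2*p-1)),
               xw (2*p-1) ++ phi p j ++ winv (xw (2*p-1)))),
      pr = (xw (2*p-1) ++ uw P p n ++ winv (vw P p n) ++ winv (xw (2*p)),
            xw (2*p-1) ++ winv (lw (Lb p)) ++ winv (xw (2*p)))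
    | (exists2 j, 2 <= j <= n.-1 &
         pr = (xw (2*p) ++ winv (vw P p j) ++ winv (xw (2*p)),
               xw (2*p) ++ psi p j ++ winv (xw (2*p))))].

Definition icp_solution (inS : word * word -> Prop) (s : seq (word * word)) : Prop :=
  [/\ s != [::], (forall pr, pr \in s -> inS pr),
      fred (flatten (map fst s)) = [::] & fred (flatten (map snd s)) = [::]].

From mathcomp Require Import all_boot.
From Stdlib Require Import Setoid Morphisms.

(* Write l_1 .. l_k for a restricted PCP solution.  For each
   p = 1..4 take the block of pairs
       W_{4(p-1)}, W_{4(p-1)+1}[l_1 .. l_k], W_{4(p-1)+2}, W_{4(p-1)+3}[l_k .. l_1].
   Inside a block the conjugating letters x_{2p-1} and x_{2p} telescope, so the
   first component of its product is
       x_{2p-2} v_1^-1 u_1 u_{l_1}..u_{l_k} u_n v_n^-1 v_{l_k}^-1 .. v_{l_1}^-1 x_{2p}^-1,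
   which collapses to x_{2p-2} x_{2p}^-1 because u_1 u_L u_n = v_1 v_L v_n; the
   second component b_p phi(l_1)..phi(l_k) b_p^-1 psi(l_k)..psi(l_1) collapses
   likewise since b_p phi(j) = psi(j)^-1 b_p.  The four blocks in a row give
   x_0 x_2^-1 x_2 x_4^-1 x_4 x_6^-1 x_6 x_8^-1 = x_8 x_8^-1 = eps (as x_0 = x_8). *)

Definition reduce_step (g : gen) (acc : word) : word :=
  match acc with
  | h :: t => if h == ginv g then t else g :: acc
  | [::] => [:: g]
  end.

Lemma fred_cat u v : fred (u ++ v) = foldr reduce_step (fred v) u.
Proof. by rewrite /fred foldr_cat. Qed.

Fixpoint reduced (w : word) : bool :=
  match w with
  | g :: ((h :: _) as t) => (h != ginv g) && reduced t
  | _ => true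
  end.

Lemma ginvK : involutive ginv.
Proof. by case=> x []. Qed.

Lemma reduced_step g r : reduced r -> reduced (reduce_step g r).
Proof.
case: r => [|h t] //= Hr; case: ifP => Hh; last by rewrite /= Hh.
by case: t Hr => [|h' t'] //= /andP[].
Qed.

Lemma reduced_fred w : reduced (fred w).
Proof. by elim: w => [|g w IH] //=; apply: reduced_step. Qed.

Lemma reduce_step_inv g r : reduced r -> reduce_step g (reduce_step (ginv g) r) = r.
Proof.
case: r => [|h t] /=; first by rewrite eqxx.
rewrite ginvK; case: eqP => [->|_] Hr; last by rewrite /= eqxx.
by case: t Hr => [|h' t'] //= /andP[/negbTE->].
Qed.

Lemma winv_cons g w : winv (g :: w) = winv w ++ [:: ginv g].
Proof. by rewrite /winv /= rev_cons cats1. Qed.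

Lemma winv_cat a b : winv (a ++ b) = winv b ++ winv a.
Proof. by rewrite /winv map_cat rev_cat. Qed.

Lemma winvK : involutive winv.
Proof. by move=> w; rewrite /winv map_rev revK (mapK ginvK). Qed.

Lemma reduce_inverse_pair w r :
  reduced r -> foldr reduce_step r (w ++ winv w) = r.
Proof.
elim: w r => [|g w IH] r Hr //=.
rewrite winv_cons catA foldr_cat /= IH ?reduce_step_inv //.
exact: reduced_step.
Qed.

(* Equality in F(Gamma), made a congruence by quantifying over contexts. *)
Definition eqv (x y : word) : Prop :=
  forall u v, fred (u ++ x ++ v) = fred (u ++ y ++ v).

#[local] Instance eqv_Equivalence : Equivalence eqv.
Proof.
split.
- by move=> x u v.
- by move=> x y H u v; rewrite H.
- by move=> x y z H1 H2 u v; rewrite H1 H2.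
Qed.

#[local] Instance cat_eqv_Proper : Proper (eqv ==> eqv ==> eqv) (@cat gen).
Proof.
move=> x y Hxy z t Hzt u v; rewrite -!catA Hxy.
by have := Hzt (u ++ y) v; rewrite -!catA.
Qed.

(* w w^-1 = eps and w^-1 w = eps, stated with a right context for rewriting. *)
Lemma cancel_l w v : eqv (w ++ winv w ++ v) v.
Proof.
move=> a b; rewrite -!catA (catA w) fred_cat [fred ((w ++ _) ++ _)]fred_cat.
by rewrite reduce_inverse_pair ?reduced_fred // -fred_cat.
Qed.

Lemma cancel_r w v : eqv (winv w ++ w ++ v) v.
Proof. by have := cancel_l (winv w) v; rewrite winvK. Qed.

Lemma eqv_nil x : eqv x [::] -> fred x = [::].
Proof. by move=> H; have := H [::] [::]; rewrite /= !cats0. Qed.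

Lemma telescope_conj (f : nat -> word) X L Z :
  eqv (winv X ++ flatten (map (fun j => X ++ f j ++ winv X) L) ++ Z)
      (flatten (map f L) ++ winv X ++ Z).
Proof.
elim: L => [|j L IH] /=; first reflexivity.
by rewrite -!catA cancel_r IH.
Qed.

Lemma flatten_winv_rev (f : nat -> word) L :
  flatten (map (fun j => winv (f j)) (rev L)) = winv (flatten (map f L)).
Proof.
elim: L => [|j L IH] //=.
by rewrite rev_cons map_rcons -cats1 flatten_cat IH winv_cat /= cats0.
Qed.

Lemma phi_shift p L :
  lw (Lb p) ++ flatten (map (phi p) L) =
  flatten (map (fun j => winv (psi p j)) L) ++ lw (Lb p).
Proof.
elim: L => [|j L IH] //=.
by rewrite /winv /psi /phi map_cat rev_cat map_nseq rev_nseq -!catA IH.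
Qed.

Lemma phi_psi_cancel p L Z :
  eqv (lw (Lb p) ++ flatten (map (phi p) L) ++ winv (lw (Lb p)) ++
       flatten (map (psi p) (rev L)) ++ Z) Z.
Proof.
rewrite catA phi_shift -!catA cancel_l.
rewrite -[psi p]/(fun j => psi p j) -{1}(eq_map (fun j => winvK (psi p j))).
by rewrite flatten_winv_rev cancel_l.
Qed.

Lemma flatten_delta p (g : nat -> seq ab) L :
  flatten (map (fun k => delta p (g k)) L) = delta p (flatten (map g L)).
Proof. by elim: L => [|k L IH] //=; rewrite IH /delta map_cat. Qed.

Section Block.
Variables (P : seq (seq ab * seq ab)) (ls : seq nat).

Definition pairA p :=
  (xw (2*p-2) ++ winv (vw P p 1) ++ uw P p 1 ++ winv (xw (2*p-1)),
   xw (2*p-2) ++ lw (Lb p) ++ winv (xw (2*p-1))).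
Definition pairB p j :=
  (xw (2*p-1) ++ uw P p j ++ winv (xw (2*p-1)),
   xw (2*p-1) ++ phi p j ++ winv (xw (2*p-1))).
Definition pairC p :=
  (xw (2*p-1) ++ uw P p (size P) ++ winv (vw P p (size P)) ++ winv (xw (2*p)),
   xw (2*p-1) ++ winv (lw (Lb p)) ++ winv (xw (2*p))).
Definition pairD p j :=
  (xw (2*p) ++ winv (vw P p j) ++ winv (xw (2*p)),
   xw (2*p) ++ psi p j ++ winv (xw (2*p))).

Definition block p := pairA p :: map (pairB p) ls ++ pairC p :: map (pairD p) (rev ls).

Lemma block_proj (pr : word * word -> word) p :
  flatten (map pr (block p)) =
  pr (pairA p) ++ flatten (map (fun j => pr (pairB p j)) ls) ++
  pr (pairC p) ++ flatten (map (fun j => pr (pairD p j)) (rev ls)).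
Proof. by rewrite /block /= map_cat flatten_cat /= -!map_comp. Qed.

(* Second components: the x's telescope and b_p phi(L) b_p^-1 psi(rev L) = eps. *)
Lemma block_snd p :
  eqv (flatten (map snd (block p))) (xw (2*p-2) ++ winv (xw (2*p))).
Proof.
rewrite -[flatten _]cats0 block_proj.
cbv beta iota delta [fst snd pairA pairB pairC pairD].
rewrite -!catA telescope_conj -?catA.
by rewrite cancel_r telescope_conj phi_psi_cancel cats0.
Qed.

(* ls solves the PCP instance (its range condition is only needed for block_in). *)
Hypothesis pcp_eq : pcp_u P 1 ++ flatten (map (pcp_u P) ls) ++ pcp_u P (size P) =
  pcp_v P 1 ++ flatten (map (pcp_v P) ls) ++ pcp_v P (size P).

Lemma uw_vw_eq p R :
  uw P p 1 ++ flatten (map (uw P p) ls) ++ uw P p (size P) ++ R =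
  vw P p 1 ++ flatten (map (vw P p) ls) ++ vw P p (size P) ++ R.
Proof.
have := congr1 (fun x => delta p x ++ R) pcp_eq.
by rewrite /= /delta !map_cat -/(delta p) !flatten_delta -!catA.
Qed.

(* First components: the x's telescope and v_1^-1 u_1 u_L u_n v_n^-1 v_L^-1 = eps. *)
Lemma block_fst p :
  eqv (flatten (map fst (block p))) (xw (2*p-2) ++ winv (xw (2*p))).
Proof.
rewrite -[flatten _]cats0 block_proj.
cbv beta iota delta [fst snd pairA pairB pairC pairD].
rewrite -!catA telescope_conj -?catA.
rewrite cancel_r telescope_conj (flatten_winv_rev (vw P p)) uw_vw_eq.
by rewrite cancel_r !cancel_l cats0.
Qed.

Lemma block_in p pr :
  (forall l, l \in ls -> 2 <= l <= (size P).-1) -> 1 <= p <= 4 ->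
  pr \in block p -> inW P pr.
Proof.
move=> Hls Hp; rewrite /block inE mem_cat inE.
case/orP => [/eqP->|/orP[/mapP[j Hj ->]|/orP[/eqP->|/mapP[j Hj ->]]]];
  exists p => //.
- exact: Or41.
- by apply: Or42; exists j; [apply: Hls|].
- exact: Or43.
- by apply: Or44; exists j; [apply: Hls; rewrite -mem_rev|].
Qed.
End Block.

(* Four consecutive blocks close up, since x_0 is x_8. *)
Lemma four_blocks_trivial (f : nat -> word) :
  (forall p, eqv (f p) (xw (2*p-2) ++ winv (xw (2*p)))) ->
  fred (f 1 ++ f 2 ++ f 3 ++ f 4) = [::].
Proof.
move=> Hf; apply: eqv_nil.
rewrite -[f 4]cats0 (Hf 4) (Hf 3) (Hf 2) (Hf 1) -!catA !cancel_r.
by rewrite -[xw (2*1-2)]/(xw (2*4)) cancel_l.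
Qed.

Theorem mainTheorem1 (P : seq (seq ab * seq ab)) :
  3 <= size P ->
  (exists ls, restricted_pcp_solution P ls) ->
  exists s, icp_solution (inW P) s.
Proof.
move=> _ [ls [Hls Hsol]].
exists (block P ls 1 ++ block P ls 2 ++ block P ls 3 ++ block P ls 4); split=> //.
- move=> pr; rewrite !mem_cat => /or4P[] Hpr; exact: (block_in _ _ _ _ Hls _ Hpr).
- rewrite !map_cat !flatten_cat.
  exact: (four_blocks_trivial (fun p => flatten (map fst (block P ls p)))
                              (block_fst P ls Hsol)).
- rewrite !map_cat !flatten_cat.
  exact: (four_blocks_trivial (fun p => flatten (map snd (block P ls p)))
                              (block_snd P ls)).
Qed.
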